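(* Let $G$ be a finite simple graph and $k$ a field, with $R=k[V(G)]$, such that $\operatorname{reg}(R/I(G))\ge 3$, $\operatorname{reg}(R/I(G_{|W}))\le 2$ for every proper subset $W\subsetneq V(G)$, and $|V(G)|\ge 7$. Then there exist vertices $a,b\in V(G)$ with $\{a,b\}\notin E(G)$ and $N_G(a)\cap N_G(b)\neq\emptyset$. *)

From mathcomp Require Import all_boot all_order all_algebra.
Set Implicit Arguments. Unset Strict Implicit. Unset Printing Implicit Defensive.
Import GRing.Theory.
Local Open Scope ring_scope.

Definition simple_graph (V : finType) (e : rel V) : Prop :=
  symmetric e /\ irreflexive e.

(* beta_i,alpha(R/I) = dim_k Tor_i^R(R/I, k)_alpha, computed (as usual) as the
   i-th homology of the Koszul complex K(x_v, v in W; R/I) in multidegree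
   alpha in N^W.  In multidegree alpha the Koszul complex has k-basis
   { e_T : T subset supp(alpha), x^(alpha - 1_T) not in I }, in homological
   degree #|T|, with differential
      d(e_T) = sum_{s in T} (-1)^{pos_T(s)} x_s * x^(alpha-1_T) e_{T\s},
   the term being 0 when x^(alpha-1_{T\s}) lies in I.
   A monomial x^beta lies in the edge ideal iff some edge {u,v} has
   beta_u > 0 and beta_v > 0.
   ------------------------------------------------------------------------ *)
Section Koszul.
Variables (V : finType) (k : fieldType) (e : rel V) (alpha : {ffun V -> nat}).

Definition std_monomial (beta : V -> nat) : bool :=
  [forall u, forall v, e u v ==> ~~ ((0 < beta u)%N && (0 < beta v)%N)].

Definition kvalid (T : {set V}) : bool :=
  [forall u in T, (0 < alpha u)%N] &&
  std_monomial (fun u => (alpha u - (u \in T))%N).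

Definition kidx (x : 'I_#|{set V}|) : {set V} := enum_val x.

Definition kpos (T : {set V}) (s : V) : nat :=
  #|[set u in T | (enum_rank u < enum_rank s)%N]|.

(* differential, acting on row vectors: row T is d(e_T) *)
Definition kdiff : 'M[k]_#|{set V}| :=
  \matrix_(x, y)
    (if kvalid (kidx x) && kvalid (kidx y) then
       \sum_(s in kidx x)
          (if kidx y == kidx x :\ s then (-1) ^+ kpos (kidx x) s else 0)
     else 0).

Definition kproj (i : nat) : 'M[k]_#|{set V}| :=
  \matrix_(x, y)
    (if (x == y) && kvalid (kidx x) && (#|kidx x| == i)%N then 1 else 0).

(* dim ker d_i - dim im d_{i+1} *)
Definition betti (i : nat) : nat :=
  (\rank (kproj i) - \rank (kproj i *m kdiff) - \rank (kproj i.+1 *m kdiff))%N.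

End Koszul.

Definition mdeg (V : finType) (alpha : {ffun V -> nat}) : nat :=
  (\sum_(v : V) alpha v)%N.

Definition reg_le (V : finType) (k : fieldType) (e : rel V) (W : {set V})
    (r : nat) : Prop :=
  forall (i : nat) (alpha : {ffun V -> nat}),
    [forall v, (v \notin W) ==> (alpha v == 0%N)] ->
    betti k e alpha i <> 0%N -> (mdeg alpha <= i + r)%N.

Definition reg_ge (V : finType) (k : fieldType) (e : rel V) (W : {set V})
    (r : nat) : Prop :=
  ~ reg_le k e W r.-1.

From Pilot Require Import Defs.
From mathcomp Require Import all_boot all_order all_algebra.
Set Implicit Arguments. Unset Strict Implicit. Unset Printing Implicit Defensive.
Import GRing.Theory.
Local Open Scope ring_scope.

(* Suppose no two non-adjacent vertices have a common neighbour, so that G is a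
   disjoint union of cliques, and take a Betti number beta_(i,alpha) <> 0 with
   |alpha| > i + 2.  By minimality alpha has full support, and it is squarefree
   and G has no isolated vertex, since otherwise the Koszul complex in degree
   alpha is a cone over a vertex, hence exact.  So alpha = (1,...,1), and a
   Koszul cell T of size i leaves |V| - i >= 3 pairwise non-adjacent vertices
   outside T; with one neighbour each they span an induced matching 3K2 on
   6 < |V| vertices.  But beta_(3,(1,...,1))(3K2) <> 0, contradicting
   minimality. *)

(* [\rank P - \rank (P D) - \rank (Q D)] is the homology at the degree cut out
   by [P] when [Q] projects on the next degree; a contracting homotopy kills it. *)
Lemma mxrank_homotopy (F : fieldType) n (P Q D H : 'M[F]_n) :
  P *m P = P -> P *m (H *m D + D *m H) = P -> P *m H = P *m H *m Q ->
  (\rank P <= \rank (P *m D) + \rank (Q *m D))%N.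
Proof.
move=> PP PH PHQ.
rewrite -{1}(mxrank_mul_ker P D) leq_add2l; apply: mxrankS.
set X := (P :&: kermx D)%MS.
have XD : X *m D = 0 by apply/sub_kermxP; apply: capmxSr.
have XP : X = X *m P.
  by have /submxP[M ->] : (X <= P)%MS := capmxSl _ _; rewrite -mulmxA PP.
have -> : X = X *m (P *m H) *m (Q *m D).
  rewrite (mulmxA _ Q) -(mulmxA X) -PHQ {1}XP -{1}PH !mulmxDr.
  by rewrite (mulmxA P) !mulmxA -XP XD !mul0mx addr0.
exact: submxMl.
Qed.

Lemma addr_signs_eq0 (R : pzRingType) a b : odd (a + b) -> (-1) ^+ a + (-1) ^+ b = 0 :> R.
Proof.
rewrite -signr_odd -[(-1) ^+ b]signr_odd oddD.
by case: (odd a); case: (odd b) => //= _; rewrite ?expr1 ?expr0 ?subrr // addrC subrr.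
Qed.

Section KoszulComplex.
Variables (V : finType) (k : fieldType) (e : rel V) (alpha : {ffun V -> nat}).
Local Notation n := #|{set V}|.
Local Notation kvalid := (kvalid e alpha).
Local Notation kdiff := (kdiff k e alpha).
Local Notation kproj := (kproj k e alpha).
Definition kvec (S : {set V}) : 'rV[k]_n := locked (delta_mx 0 (enum_rank S)).

Lemma kidx_enum_rank (S : {set V}) : kidx (enum_rank S) = S.
Proof. exact: enum_rankK. Qed.

Lemma enum_rank_kidx (x : 'I_n) : enum_rank (kidx x) = x.
Proof. exact: enum_valK. Qed.

Lemma kvecE S y : kvec S 0 y = (S == kidx y)%:R.
Proof.
rewrite /kvec -lock mxE eqxx /=; suff -> : (y == enum_rank S) = (S == kidx y) by [].
by apply/eqP/eqP => [->|->]; rewrite ?kidx_enum_rank ?enum_rank_kidx.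
Qed.

Lemma kvec_mulmx S p (M : 'M[k]_(n, p)) : kvec S *m M = row (enum_rank S) M.
Proof. by rewrite /kvec -lock rowE. Qed.

Lemma row_kdiff x : row x kdiff = if kvalid (kidx x) then
  \sum_(s in kidx x) (if kvalid (kidx x :\ s) then
       (-1) ^+ kpos (kidx x) s *: kvec (kidx x :\ s) else 0) else 0.
Proof.
apply/rowP => y; rewrite !mxE; case vx: (kvalid (kidx x)) => /=; last by rewrite mxE.
rewrite summxE; case vy: (kvalid (kidx y)) => /=.
  apply: eq_bigr => s _; case: eqP => [<-|ne]; first by rewrite vy !mxE kvecE eqxx mulr1.
  case: ifP => _; last by rewrite mxE.
  by rewrite !mxE kvecE; case: eqP => [E|_]; [case: ne | rewrite mulr0].
rewrite big1 // => s _; case: ifP => vs; last by rewrite mxE.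
by rewrite !mxE kvecE; case: eqP => [E|]; [rewrite -E vs in vy | rewrite mulr0].
Qed.

Lemma row_kproj x i : row x (kproj i) =
  if kvalid (kidx x) && (#|kidx x| == i)%N then kvec (kidx x) else 0.
Proof.
apply/rowP => y; rewrite !mxE -andbA; case: (kvalid _ && _); last by rewrite andbF mxE.
rewrite andbT kvecE; case: (x =P y) => [<-|ne] /=; first by rewrite eqxx.
by case: eqP => // /enum_val_inj.
Qed.

Lemma kposE (S : {set V}) s :
  kpos S s = (\sum_(u in S) (enum_rank u < enum_rank s))%N.
Proof.
rewrite /kpos -sum1_card big_mkcond [RHS]big_mkcond; apply: eq_bigr => u _.
by rewrite inE; case: (u \in S); case: ltnP.
Qed.

Lemma kpos_setU1 (S : {set V}) x s : kpos (x |: S) s =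
  (kpos S s + ((x \notin S) && (enum_rank x < enum_rank s)%N))%N.
Proof.
case: (boolP (x \in S)) => xS; first by rewrite (setUidPr _) ?sub1set // addn0.
by rewrite !kposE big_setU1 //= addnC.
Qed.

Lemma kpos_sign_swap (T : {set V}) v s : v \notin T -> s \in T ->
  (-1) ^+ kpos (v |: T) v * (-1) ^+ kpos (v |: T) s +
  (-1) ^+ kpos T s * (-1) ^+ kpos (v |: T :\ s) v = 0 :> k.
Proof.
move=> vT sT; have sv : s != v by apply: contraNneq vT => <-.
have vS : v \notin T :\ s by rewrite !inE negb_and vT orbT.
have sS : s \notin T :\ s by rewrite !inE eqxx.
rewrite -{1 2 3}(setD1K sT); move: (T :\ s) sS vS => S sS vS.
rewrite -!exprD; apply: addr_signs_eq0.
rewrite !kpos_setU1 !inE (negbTE sS) (negbTE vS) eq_sym (negbTE sv) /= !ltnn !addn0.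
rewrite !oddD; case: (odd (kpos S v)); case: (odd (kpos S s)).
all: by case: ltngtP => // /val_inj/enum_rank_inj/eqP; rewrite (negbTE sv).
Qed.
(* Multiplication by [x_v] makes the complex a cone over [v] as soon as validity
   does not see [v]: [e_T |-> +- e_(v |: T)] is then a contracting homotopy. *)
Section Cone.
Variable v : V.
Hypothesis kvalid_setD1 : forall T, kvalid (T :\ v) = kvalid T.

Lemma kvalid_setU1 T : kvalid (v |: T) = kvalid T.
Proof.
rewrite -kvalid_setD1 -[RHS]kvalid_setD1; congr kvalid.
by apply/setP => u; rewrite !inE; case: eqP.
Qed.

Definition khomotopy : 'M[k]_n := \matrix_(x, y)
  (if (v \notin kidx x) && (kidx y == v |: kidx x) then (-1) ^+ kpos (kidx y) v else 0).

Lemma row_khomotopy x : row x khomotopy = if v \notin kidx x then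
   (-1) ^+ kpos (v |: kidx x) v *: kvec (v |: kidx x) else 0.
Proof.
apply/rowP => y; rewrite !mxE; case: (v \notin kidx x) => /=; last by rewrite mxE.
by rewrite !mxE kvecE eq_sym; case: eqP => [->|_]; rewrite ?mulr1 ?mulr0.
Qed.

Lemma khomotopy_kdiff x : kvalid (kidx x) ->
  row x (khomotopy *m kdiff + kdiff *m khomotopy) = kvec (kidx x).
Proof.
set T := kidx x => vT; have sgnK m : (-1) ^+ m * (-1) ^+ m = 1 :> k by rewrite -expr2 sqrr_sign.
rewrite !rowE mulmxDr -!rowE !row_mul row_kdiff row_khomotopy vT.
case: (boolP (v \in T)) => vinT /=.
  rewrite mul0mx add0r mulmx_suml (bigD1 v) //= big1 ?addr0.
    rewrite kvalid_setD1 vT -scalemxAl kvec_mulmx row_khomotopy kidx_enum_rank.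
    by rewrite !inE eqxx /= scalerA setD1K // sgnK scale1r.
  move=> s /andP[sT nsv]; case: ifP => _; last by rewrite mul0mx.
  rewrite -scalemxAl kvec_mulmx row_khomotopy kidx_enum_rank !inE eq_sym (negbTE nsv).
  by rewrite vinT scaler0.
rewrite -scalemxAl kvec_mulmx row_kdiff kidx_enum_rank kvalid_setU1 vT.
rewrite big_setU1 //= setU1K // vT scalerDr scalerA sgnK scale1r -addrA.
rewrite -[RHS]addr0; congr (_ + _).
rewrite scaler_sumr mulmx_suml -big_split big1 // => s sT /=.
have sv : s != v by apply: contraNneq vinT => <-.
have -> : (v |: T) :\ s = v |: (T :\ s).
  by apply/setP => u; rewrite !inE; case: (u =P v) => // ->; rewrite eq_sym sv.
rewrite kvalid_setU1; case: ifP => vs; last by rewrite mul0mx scaler0 addr0.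
rewrite -scalemxAl kvec_mulmx row_khomotopy kidx_enum_rank !inE (negbTE vinT) andbF /=.
by rewrite !scalerA -scalerDl kpos_sign_swap // scale0r.
Qed.

Lemma betti_cone i : betti k e alpha i = 0%N.
Proof.
rewrite /betti; apply/eqP; rewrite -subnDA subn_eq0.
apply: (@mxrank_homotopy _ _ _ _ _ khomotopy).
- apply/row_matrixP => x; rewrite row_mul row_kproj; case: ifP => c; last by rewrite mul0mx.
  by rewrite kvec_mulmx enum_rank_kidx row_kproj c.
- apply/row_matrixP => x; rewrite row_mul row_kproj; case: ifP => c; last by rewrite mul0mx.
  by move/andP: c => [vx _]; rewrite kvec_mulmx enum_rank_kidx khomotopy_kdiff.
- apply/row_matrixP => x; rewrite !row_mul row_kproj; case: ifP => c; last by rewrite !mul0mx.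
  move/andP: c => [vx /eqP sz].
  rewrite kvec_mulmx enum_rank_kidx row_khomotopy; case: ifP => nv; last by rewrite mul0mx.
  rewrite -scalemxAl kvec_mulmx row_kproj kidx_enum_rank kvalid_setU1 vx.
  by rewrite cardsU1 nv sz eqxx.
Qed.
End Cone.

Lemma betti_eq0_no_cell i :
  (forall T, kvalid T -> #|T| != i) -> betti k e alpha i = 0%N.
Proof.
move=> noT; rewrite /betti; have -> : kproj i = 0.
  apply/matrixP => x y; rewrite !mxE.
  by case: (boolP (kvalid (kidx x))) => [/noT/negbTE->|]; rewrite ?andbF.
by rewrite mxrank0.
Qed.

Lemma kvalid_nonadjacent T u w : kvalid T -> u \notin T -> w \notin T ->
  (0 < alpha u)%N -> (0 < alpha w)%N -> ~~ e u w.
Proof.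
case/andP=> _ /forallP/(_ u)/forallP/(_ w) std uT wT au aw.
by apply: contraL std => euw; rewrite euw (negbTE uT) (negbTE wT) !subn0 au aw.
Qed.

Lemma positive_on_setD1 v T : (0 < alpha v)%N ->
  [forall u in T :\ v, 0 < alpha u]%N = [forall u in T, 0 < alpha u]%N.
Proof.
move=> av; apply/forall_inP/forall_inP => H u uT; last by apply: H; case/setD1P: uT.
by case: (u =P v) => [->|/eqP uv] //; apply: H; apply/setD1P.
Qed.

Lemma kvalid_setD1_multiple v T : (1 < alpha v)%N -> kvalid (T :\ v) = kvalid T.
Proof.
move=> av; rewrite /Defs.kvalid positive_on_setD1 ?(ltnW av) //; congr andb.
apply: eq_forallb => u; apply: eq_forallb => w.
have pos x : (0 < alpha x - (x \in T :\ v))%N = (0 < alpha x - (x \in T))%N.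
  rewrite !inE; case: (x =P v) => [->|] //=.
  by rewrite subn0 subn_gt0 (ltnW av) (leq_ltn_trans (leq_b1 _) av).
by rewrite !pos.
Qed.

Lemma kvalid_setD1_isolated v T : (0 < alpha v)%N -> (forall u, ~~ e v u) ->
  symmetric e -> kvalid (T :\ v) = kvalid T.
Proof.
move=> av iso esym; rewrite /Defs.kvalid positive_on_setD1 //; congr andb.
apply: eq_forallb => u; apply: eq_forallb => w.
case: (u =P v) => [->|/eqP uv]; first by rewrite (negbTE (iso w)).
case: (w =P v) => [->|/eqP wv]; first by rewrite esym (negbTE (iso u)).
by rewrite !inE (negbTE uv) (negbTE wv).
Qed.

End KoszulComplex.

Lemma big_prod_bool R idx (op : Monoid.com_law idx) (I : finType) (F : I * bool -> R) :
  \big[op/idx]_p F p = \big[op/idx]_i op (F (i, true)) (F (i, false)).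
Proof.
rewrite (eq_bigr (fun p => F (p.1, p.2))) => [|[] //].
by rewrite -(pair_bigA _ (fun i b => F (i, b))); apply: eq_bigr => i _; rewrite big_bool.
Qed.

Lemma subb_gt0 (x y : bool) : (0 < x - y)%N = x && ~~ y.
Proof. by case: x; case: y. Qed.

Lemma card_setD1_4 (V : finType) (T : {set V}) s : s \in T -> #|T| = 4%N -> #|T :\ s| = 3%N.
Proof. by move=> sT; rewrite (cardsD1 s) sT add1n => [[]]. Qed.

Section InducedMatching.
Variables (V : finType) (k : fieldType) (e : rel V) (m : 'I_3 * bool -> V).
Hypothesis e_m : forall p q, e (m p) (m q) = (p.1 == q.1) && (p.2 != q.2).

Lemma matching_inj : injective m.
Proof.
move=> p q mpq; have := e_m q (p.1, ~~ p.2); rewrite -mpq e_m eqxx /=.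
by case: p q {mpq} => [i []] [j []] /= /esym/andP[/eqP->].
Qed.

Local Notation W := [set m p | p : 'I_3 * bool].

Definition matching_indicator : {ffun V -> nat} := [ffun u => (u \in W) : nat].
Local Notation alpha := matching_indicator.
Local Notation kvalid := (kvalid e alpha).
Local Notation kdiff := (kdiff k e alpha).
Local Notation kproj := (kproj k e alpha).

Lemma big_matching R idx (op : Monoid.com_law idx) (U : {set V}) (F : V -> R) :
  U \subset W -> \big[op/idx]_(u in U) F u = \big[op/idx]_(p | m p \in U) F (m p).
Proof.
move=> sUW; rewrite (eq_bigl (fun u => (u \in W) && (u \in U))) => [|u]; last first.
  by case: (boolP (u \in U)) => [/(subsetP sUW)->|]; rewrite ?andbF.
by rewrite big_imset_cond //; move=> p q _ _; apply: matching_inj.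
Qed.

Lemma matching_kvalid S : kvalid S =
  (S \subset W) && [forall i, (m (i, false) \in S) || (m (i, true) \in S)].
Proof.
rewrite /Defs.kvalid /std_monomial; congr andb.
  apply/forall_inP/subsetP => H u uS; last by rewrite ffunE lt0b H.
  by have := H u uS; rewrite ffunE lt0b.
apply/forallP/forallP => [H i | H u].
  have := H (m (i, false)) => /forallP/(_ (m (i, true))).
  by rewrite e_m eqxx /= !ffunE !imset_f // !subb_gt0 -negb_or negbK.
apply/forallP => w; apply/implyP => euw; rewrite !ffunE !subb_gt0; apply/negP.
case/andP=> [/andP[/imsetP[p _ def_u] mpS] /andP[/imsetP[q _ def_w] mqS]].
move: euw mpS mqS; rewrite def_u def_w e_m => /andP[/eqP pq1 pq2]; have := H p.1.
by case: p q pq1 pq2 {def_u def_w} => [i []] [j []] //= <- _ /orP[]->.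
Qed.

Definition matching_pick (S : {set V}) (i : 'I_3) : V :=
  if m (i, false) \in S then m (i, false) else m (i, true).

(* The complex of 3K2 in degree (1,...,1) is the tensor product of the complexes
   of its edges, each having [H_1] spanned by [e_a = e_a'].  In the basis [e_T]
   the product class [e_x * e_y * e_z] carries the sign of the shuffle sorting
   [(x, y, z)] by rank. *)
Definition shuffle_sign (S : {set V}) : k := (-1) ^+ (\sum_(i < 3) \sum_(j < 3)
  ((i < j) && (enum_rank (matching_pick S j) < enum_rank (matching_pick S i))))%N.

Lemma ltn_rank_swap p q : p != q ->
  (enum_rank (m q) < enum_rank (m p))%N = ~~ (enum_rank (m p) < enum_rank (m q))%N.
Proof.
move=> pq; rewrite ltnNge leq_eqVlt val_eqE (inj_eq enum_rank_inj).
by rewrite (inj_eq matching_inj) (negbTE pq).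
Qed.

Lemma shuffle_sign_cocycle U : kvalid U -> #|U| = 4%N ->
  \sum_(s in U) (if kvalid (U :\ s) then (-1) ^+ kpos U s * shuffle_sign (U :\ s) else 0) = 0.
Proof.
rewrite matching_kvalid => /andP[sUW hitU] cardU.
have sub s : U :\ s \subset W := subset_trans (subD1set U s) sUW.
have sumE (R : Type) (idx : R) (op : Monoid.com_law idx) (S : {set V}) (F : V -> R) :
    S \subset W -> \big[op/idx]_(u in S) F u =
    \big[op/idx]_(i < 3) op (if m (i, true) \in S then F (m (i, true)) else idx)
                           (if m (i, false) \in S then F (m (i, false)) else idx).
  by move=> sSW; rewrite big_matching // big_mkcond big_prod_bool.
have allE (B : pred 'I_3) : [forall i, B i] = \big[andb/true]_(i < 3) B i.
  by rewrite big_andE; apply: eq_forallb.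
move: cardU hitU; rewrite -sum1_card sumE // sumE // allE !big_ord_recl !big_ord0 /=.
rewrite !matching_kvalid !sub !allE !kposE !sumE // /shuffle_sign /matching_pick.
rewrite !big_ord_recl !big_ord0 /=.
rewrite !in_setD1 !(inj_eq matching_inj) /= ?add0n ?addn0.
(* Validity and [#|U| = 4] leave the twelve sets made of one edge and one end of
   each other edge; only the two ends of the full edge contribute, with opposite
   signs. *)
move: (m (ord0, true) \in U) (m (ord0, false) \in U) (m (lift ord0 ord0, true) \in U)
  (m (lift ord0 ord0, false) \in U) (m (lift ord0 (lift ord0 ord0), true) \in U)
  (m (lift ord0 (lift ord0 ord0), false) \in U) => [] [] [] [] [] [] //= _ _.
all: rewrite ?mul0r ?add0r ?addr0 -!exprD; apply: addr_signs_eq0; rewrite ?ltnn.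
all: repeat match goal with |- context [(@nat_of_ord ?n ?x < @nat_of_ord ?n ?y)%N] =>
  lazymatch goal with |- context [(@nat_of_ord n y < @nat_of_ord n x)%N] =>
    rewrite [(@nat_of_ord n y < @nat_of_ord n x)%N]ltn_rank_swap // end end.
all: repeat match goal with |- context [(@nat_of_ord _ ?x < @nat_of_ord _ ?y)%N] =>
  case: (x < y)%N end.
all: by [].
Qed.

Definition matching_cochain : 'cV[k]_#|{set V}| :=
  \col_y (if kvalid (kidx y) && (#|kidx y| == 3)%N then shuffle_sign (kidx y) else 0).

Lemma matching_pick_inj S : injective (matching_pick S).
Proof. by move=> i j; rewrite /matching_pick; do 2 case: ifP => _; case/matching_inj. Qed.

Lemma matching_kvalid_card S : kvalid S -> (3 <= #|S|)%N.
Proof.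
rewrite matching_kvalid => /andP[_ /forallP hitS].
rewrite -[3%N]card_ord -(card_imset _ (@matching_pick_inj S)); apply: subset_leq_card.
apply/subsetP => _ /imsetP[i _ ->]; rewrite /matching_pick.
by case: ifP => //; case/orP: (hitS i) => ->.
Qed.

Lemma kproj3_kdiff : kproj 3 *m kdiff = 0.
Proof.
apply/row_matrixP => x; rewrite row_mul row_kproj row0.
case: ifP => [/andP[vx /eqP sx]|_]; last by rewrite mul0mx.
rewrite kvec_mulmx enum_rank_kidx row_kdiff vx big1 // => s sT.
case: ifP => // /matching_kvalid_card.
by move: sx; rewrite (cardsD1 s) sT add1n => -[->].
Qed.

Lemma kproj4_kdiff_sub : (kproj 4 *m kdiff <= kproj 3)%MS.
Proof.
suff <- : kproj 4 *m kdiff *m kproj 3 = kproj 4 *m kdiff by apply: submxMl.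
apply/row_matrixP => x; rewrite !row_mul row_kproj.
case: ifP => [/andP[vx /eqP sx]|_]; last by rewrite !mul0mx.
rewrite kvec_mulmx enum_rank_kidx row_kdiff vx mulmx_suml; apply: eq_bigr => s sT.
case: ifP => vs; last by rewrite mul0mx.
by rewrite -scalemxAl kvec_mulmx row_kproj kidx_enum_rank vs card_setD1_4 ?eqxx.
Qed.

Lemma kproj4_kdiff_cochain : kproj 4 *m kdiff *m matching_cochain = 0.
Proof.
apply/row_matrixP => x; rewrite !row_mul row_kproj row0.
case: ifP => [/andP[vx /eqP sx]|_]; last by rewrite !mul0mx.
rewrite kvec_mulmx enum_rank_kidx row_kdiff vx mulmx_suml; apply/rowP => j.
rewrite summxE [RHS]mxE -[RHS](shuffle_sign_cocycle vx sx); apply: eq_bigr => s sT.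
case: ifP => vs; last by rewrite mul0mx mxE.
by rewrite -scalemxAl kvec_mulmx !mxE kidx_enum_rank vs card_setD1_4 ?eqxx.
Qed.

Lemma kproj3_cochain_neq0 : kproj 3 *m matching_cochain != 0.
Proof.
pose T := [set m (i, false) | i : 'I_3].
have vT : kvalid T.
  rewrite matching_kvalid; apply/andP; split.
    by apply/subsetP => _ /imsetP[i _ ->]; apply: imset_f.
  by apply/forallP => i; rewrite imset_f.
have cT : #|T| = 3%N by rewrite card_imset ?card_ord // => i j /matching_inj[].
apply/eqP => /(congr1 (row (enum_rank T))); rewrite row_mul row_kproj row0.
rewrite kidx_enum_rank vT cT eqxx kvec_mulmx => /(congr1 (fun M : 'cV_1 => M 0 0)).
by rewrite !mxE kidx_enum_rank vT cT eqxx /= => /eqP; rewrite signr_eq0.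
Qed.

Lemma betti3_matching : betti k e alpha 3 != 0%N.
Proof.
rewrite /betti kproj3_kdiff mxrank0 subn0 subn_eq0 -ltnNge ltn_neqAle.
have [-> ->] := mxrank_leqif_sup kproj4_kdiff_sub; rewrite andbT.
apply: contra kproj3_cochain_neq0 => /submxP[M ->].
by rewrite -mulmxA kproj4_kdiff_cochain mulmx0.
Qed.

Lemma card_matching : #|W| = 6%N.
Proof. by rewrite card_imset ?card_prod ?card_ord ?card_bool //; apply: matching_inj. Qed.

Lemma mdeg_matching : mdeg alpha = 6%N.
Proof.
rewrite -card_matching -sum1_card big_mkcond; apply: eq_bigr => u _.
by rewrite ffunE; case: (u \in W).
Qed.

Lemma matching_reg_ge3 : reg_ge k e W 3.
Proof.
move=> /(_ 3%N alpha) reg2.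
have supp : [forall v, (v \notin W) ==> (alpha v == 0%N)].
  by apply/forallP => v; apply/implyP => vW; rewrite ffunE (negbTE vW).
by have := reg2 supp (elimN eqP betti3_matching); rewrite mdeg_matching.
Qed.

End InducedMatching.

Section ClusterGraph.
Variables (V : finType) (e : rel V).
Hypotheses (e_sym : symmetric e) (e_irr : irreflexive e).
Hypothesis e_cluster : forall x y z, x != y -> e x z -> e y z -> e x y.

Lemma cluster_induced_matching (I : finType) (v nb : I -> V) :
  injective v -> (forall i j, ~~ e (v i) (v j)) -> (forall i, e (v i) (nb i)) ->
  forall p q : I * bool,
  e (if p.2 then nb p.1 else v p.1) (if q.2 then nb q.1 else v q.1) =
  (p.1 == q.1) && (p.2 != q.2).
Proof.
move=> v_inj indep e_nb.
have e_v_nb i j : e (v i) (nb j) = (i == j).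
  case: (i =P j) => [<-|/eqP ij]; first exact: e_nb.
  apply: negbTE; apply: contra (indep i j) => e_ij.
  by apply: e_cluster e_ij (e_nb j); rewrite (inj_eq v_inj).
have e_nb_nb i j : ~~ e (nb i) (nb j).
  case: (i =P j) => [->|/eqP ij]; first by rewrite e_irr.
  have vi_nbj : v i != nb j by apply: contraNneq (indep j i) => ->; apply: e_nb.
  apply: contraFN (etrans (e_v_nb i j) (negbTE ij)) => e_ij.
  by apply: e_cluster vi_nbj (e_nb i) _; rewrite e_sym.
case=> i [] [j []] /=; rewrite ?andbT ?andbF.
- exact: negbTE.
- by rewrite e_sym e_v_nb eq_sym.
- exact: e_v_nb.
- exact: negbTE.
Qed.
End ClusterGraph.

Section CriticalMultidegree.
Variables (V : finType) (k : fieldType) (e : rel V).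
Hypotheses (e_sym : symmetric e) (e_irr : irreflexive e).
Hypothesis reg_proper : forall W : {set V}, W \proper [set: V] -> reg_le k e W 2.
Variables (i : nat) (alpha : {ffun V -> nat}).
Hypothesis betti_neq0 : betti k e alpha i <> 0%N.
Hypothesis mdeg_gt : (i + 2 < mdeg alpha)%N.

Lemma critical_alpha_gt0 v : (0 < alpha v)%N.
Proof.
rewrite lt0n; apply/negP => /eqP alpha_v.
have supp : [forall u, (u \notin [set: V] :\ v) ==> (alpha u == 0%N)].
  by apply/forallP => u; apply/implyP; rewrite !inE andbT negbK => /eqP->; rewrite alpha_v.
by have := reg_proper (properD1 (in_setT v)) supp betti_neq0; rewrite leqNgt mdeg_gt.
Qed.

Lemma critical_alpha_eq1 v : alpha v = 1%N.
Proof.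
apply/eqP; rewrite eqn_leq critical_alpha_gt0 andbT leqNgt; apply/negP => alpha_v.
by apply: betti_neq0; apply: (@betti_cone _ k _ _ v) => T; apply: kvalid_setD1_multiple.
Qed.

Lemma critical_nonisolated v : exists u, e v u.
Proof.
have [u e_vu | isolated] := pickP (e v); first by exists u.
case: betti_neq0; apply: (@betti_cone _ k _ _ v) => T.
by apply: kvalid_setD1_isolated (critical_alpha_gt0 v) _ e_sym => u; rewrite isolated.
Qed.

Lemma critical_independent_triple :
  exists v : 'I_3 -> V, injective v /\ forall a b, ~~ e (v a) (v b).
Proof.
have [T vT cT] : exists2 T, kvalid e alpha T & #|T| = i.
  have [T /andP[vT /eqP cT] | none] := pickP (fun T => kvalid e alpha T && (#|T| == i)).
    by exists T.
  case: betti_neq0; apply: betti_eq0_no_cell => T vT.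
  by apply: contraFN (none T) => ->; rewrite vT.
have mdegE : mdeg alpha = #|V|.
  by rewrite /mdeg (eq_bigr (fun=> 1%N)) ?sum1_card // => u _; rewrite critical_alpha_eq1.
have big : (3 <= #|~: T|)%N by move: mdeg_gt; rewrite mdegE -(cardsC T) cT ltn_add2l.
exists (fun a => enum_val (widen_ord big a)); split.
  by move=> a b /enum_val_inj [] /val_inj.
by move=> a b; apply: (kvalid_nonadjacent vT); rewrite ?critical_alpha_gt0 // -in_setC enum_valP.
Qed.

Hypothesis e_cluster : forall x y z, x != y -> e x z -> e y z -> e x y.
Hypothesis card_V : (7 <= #|V|)%N.

Lemma critical_not_cluster : False.
Proof.
have [v [v_inj indep]] := critical_independent_triple.
pose nb u := odflt u [pick w | e u w].
have e_nb u : e u (nb u).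
  rewrite /nb; case: pickP => //= isolated.
  by have [w] := critical_nonisolated u; rewrite isolated.
pose m (p : 'I_3 * bool) := if p.2 then nb (v p.1) else v p.1.
have e_m := cluster_induced_matching e_sym e_irr e_cluster v_inj indep (fun a => e_nb (v a)).
apply: (matching_reg_ge3 (m := m) e_m); apply: reg_proper.
by rewrite properT; apply/eqP => W_V; move: card_V; rewrite -cardsT -W_V (card_matching e_m).
Qed.
End CriticalMultidegree.

Theorem mainTheorem4 (V : finType) (k : fieldType) (e : rel V) :
  simple_graph e ->
  reg_ge k e [set: V] 3 ->
  (forall W : {set V}, W \proper [set: V] -> reg_le k e W 2) ->
  (7 <= #|V|)%N ->
  exists a b : V, [/\ a != b, ~~ e a b & exists c : V, e a c && e b c].
Proof.
move=> [e_sym e_irr] reg_ge3 reg_proper card_V.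
have [/existsP[a /existsP[b /and3P[ab nab /existsP[c ec]]]] | noP3] :=
  boolP [exists a, exists b, [&& a != b, ~~ e a b & [exists c, e a c && e b c]]].
  by exists a, b; split=> //; exists c.
case: reg_ge3 => i alpha _ betti_neq0; rewrite leqNgt; apply/negP => mdeg_gt.
apply: (critical_not_cluster e_sym e_irr reg_proper betti_neq0 mdeg_gt _ card_V).
move=> x y z xy exz eyz; apply: contraR noP3 => nxy.
apply/existsP; exists x; apply/existsP; exists y; rewrite xy nxy.
by apply/existsP; exists z; rewrite exz eyz.
Qed.
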